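(* Let $E$ be a closed subset of $\mathbb{R}^n$ and let $k \ge 1$ be such that every two points $x, y \in E$ can be connected by a rectifiable path contained in $E$ whose length is at most $k\,|x-y|$. Let $A : \mathbb{R}^n \to \mathbb{R}$ be a fixed linear mapping and let $f : E \to \mathbb{R}$ be locally Lipschitz. Suppose that for every interval $I \subseteq \mathbb{R}$ and every locally Lipschitz map $p : I \to E$, the derivative of $t \mapsto f(p(t))$ equals $A(p'(t))$ for almost every $t \in I$. Then $f$ is the restriction to $E$ of an affine function on $\mathbb{R}^n$.
   Context: $|\cdot|$ denotes the Euclidean norm on $\mathbb{R}^n$. *)

From HB Require Import structures.
From mathcomp Require Import all_boot all_order all_algebra.
From mathcomp Require Import all_classical all_reals all_analysis.
Set Implicit Arguments. Unset Strict Implicit. Unset Printing Implicit Defensive.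
Import Order.TTheory GRing.Theory Num.Theory.
Import numFieldNormedType.Exports.
Local Open Scope classical_set_scope.
Local Open Scope ring_scope.

(* Euclidean norm |x| on R^n (the library norm on 'rV is the sup norm). *)
Definition enorm (R : realType) (n : nat) (x : 'rV[R]_n) : R :=
  Num.sqrt (\sum_(i < n) x ord0 i ^+ 2).

Definition path_length (R : realType) (n : nat) (g : R -> 'rV[R]_n) (a b : R)
  : \bar R :=
  ereal_sup [set v : \bar R | exists (m : nat) (t : nat -> R),
     [/\ t 0%N = a, t m = b, (forall i, (i < m)%N -> t i <= t i.+1) &
          v = (\sum_(i < m) enorm (g (t i.+1) - g (t i)))%:E] ].

Definition quasiconvex (R : realType) (n : nat) (E : set 'rV[R]_n) (k : R) :=
  forall x y, E x -> E y ->
    exists (a b : R) (g : R -> 'rV[R]_n),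
      [/\ a <= b, {within `[a, b], continuous g}, g a = x /\ g b = y,
          (forall t, a <= t <= b -> E (g t)) &
          (path_length g a b <= (k * enorm (x - y))%:E)%E].

Definition loc_lipschitz_on (R : realType) (n : nat) (E : set 'rV[R]_n)
  (f : 'rV[R]_n -> R) :=
  forall x, E x -> exists r L : R, 0 < r /\
    forall y z, E y -> E z -> enorm (y - x) < r -> enorm (z - x) < r ->
      `|f y - f z| <= L * enorm (y - z).

Definition loc_lipschitz_path (R : realType) (n : nat) (I : interval R)
  (p : R -> 'rV[R]_n) :=
  forall t, t \in I -> exists r L : R, 0 < r /\
    forall s u, s \in I -> u \in I -> `|s - t| < r -> `|u - t| < r ->
      enorm (p s - p u) <= L * `|s - u|.

From HB Require Import structures.
From mathcomp Require Import all_boot all_order all_algebra.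
From mathcomp Require Import all_classical all_reals all_analysis.
From mathcomp Require Import ring lra measurable_realfun.
Set Implicit Arguments. Unset Strict Implicit. Unset Printing Implicit Defensive.
Import Order.TTheory GRing.Theory Num.Theory.
Import numFieldNormedType.Exports.
Local Open Scope classical_set_scope.
Local Open Scope ring_scope.

(* Along a path p in E, the function h = f \o p - A \o p has derivative
   (f \o p)' - A p' = 0 almost everywhere, and it is locally Lipschitz when p is
   Lipschitz; a locally Lipschitz function on an interval whose derivative
   vanishes almost everywhere is constant.  Quasiconvexity joins any two points
   of E by a rectifiable path in E, whose arc-length reparametrisation is
   1-Lipschitz; hence f - A is constant on E.

   The vanishing derivative is exploited without integration: the exceptional
   null set is covered by an open set U of small measure, and real induction
   gives |h t - h a| <= eps (t - a) + L |U `&` [a, t]|. *)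

Section RealInduction.
Context {R : realType}.

Lemma real_induction (a b : R) (Q : R -> Prop) : a <= b -> Q a ->
  (forall t, a < t <= b -> (forall s, a <= s < t -> Q s) -> Q t) ->
  (forall t, a <= t < b -> Q t ->
     exists2 d, 0 < d & forall s, t < s < t + d -> s <= b -> Q s) ->
  Q b.
Proof.
move=> ab Qa Qleft Qright.
pose S := [set s | a <= s <= b /\ forall u, a <= u <= s -> Q u].
have Sa : S a.
  split=> [|u /andP[au ua]]; first by rewrite lexx ab.
  by have -> : u = a by apply/eqP; rewrite eq_le ua au.
have supS : has_sup S by split; [exists a | exists b => s [/andP[_ ->]]].
set c := sup S.
have ac : a <= c by apply: sup_upper_bound.
have cb : c <= b by apply: ge_sup; [exists a | move=> s [/andP[_ ->]]].
have Qlt u : a <= u < c -> Q u.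
  move=> /andP[au uc].
  have [e [_ Qe] ue] := sup_adherent (eps := c - u) (ltac:(by rewrite subr_gt0)) supS.
  by apply: Qe; rewrite au /= ltW //; move: ue; rewrite -/c; lra.
have Qle u : a <= u <= c -> Q u.
  move=> /andP[au uc]; have [uc'|cu] := ltP u c; first by apply: Qlt; rewrite au uc'.
  have -> : u = c by apply/eqP; rewrite eq_le uc cu.
  have [ac'|ca] := ltP a c; first by apply: Qleft; [rewrite ac' cb | exact: Qlt].
  by have -> : c = a by apply/eqP; rewrite eq_le ca ac.
have [cb'|bc] := ltP c b; last first.
  have -> : b = c by apply/eqP; rewrite eq_le bc cb.
  by apply: Qle; rewrite ac lexx.
have [d d0 Qd] := Qright c (ltac:(by rewrite ac cb')) (Qle c (ltac:(by rewrite ac lexx))).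
pose s := Num.min (c + d / 2) b.
have cs : c < s by rewrite /s lt_min cb' andbT ltrDl divr_gt0.
have Ss : S s.
  split; first by rewrite /s ge_min lexx orbT andbT (le_trans ac) // ltW.
  move=> u /andP[au us]; have [uc|cu] := leP u c; first by apply: Qle; rewrite au uc.
  apply: Qd; last by rewrite (le_trans us) // /s ge_min lexx orbT.
  rewrite cu /= (le_lt_trans us) // /s gt_min ltrD2l ltr_pdivrMr //.
  by rewrite ltr_pMr // ltr1n.
by have := sup_upper_bound supS Ss; rewrite -/c leNgt cs.
Qed.

End RealInduction.

Section LipschitzOnInterval.
Context {R : realType}.
Implicit Types (a b L : R) (h : R -> R).

Definition lipschitz_itv a b L h := forall s u, a <= s <= b -> a <= u <= b ->
  `|h s - h u| <= L * `|s - u|.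

Definition locally_lipschitz_itv a b h := forall t, a <= t <= b ->
  exists r L : R, 0 < r /\ forall s u, a <= s <= b -> a <= u <= b ->
    `|s - t| < r -> `|u - t| < r -> `|h s - h u| <= L * `|s - u|.

Lemma lipschitz_itv_glue a m' m s L1 L2 h : 0 <= L1 -> 0 <= L2 ->
  m' <= m -> m <= s -> lipschitz_itv a m L1 h -> lipschitz_itv m' s L2 h ->
  lipschitz_itv a s (L1 + L2) h.
Proof.
move=> L10 L20 mm ms H1 H2.
suff key u v : u <= v -> a <= u <= s -> a <= v <= s ->
    `|h u - h v| <= (L1 + L2) * `|u - v|.
  move=> u v Hu Hv; have [uv|vu] := leP u v; first exact: key.
  by rewrite distrC (distrC u); apply: key => //; apply: ltW.
move=> uv /andP[au us] /andP[av vs].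
have [vm|mv] := leP v m.
  apply: le_trans (H1 _ _ _ _) _; first by rewrite au (le_trans uv vm).
    by rewrite av vm.
  by rewrite ler_wpM2r // lerDl.
have [mu|um'] := leP m' u.
  apply: le_trans (H2 _ _ _ _) _; first by rewrite mu us.
    by rewrite vs (le_trans mu uv).
  by rewrite ler_wpM2r // lerDr.
have um : u <= m by rewrite ltW // (lt_le_trans um' mm).
have h1 := H1 u m (ltac:(by rewrite au um)) (ltac:(by rewrite (le_trans au um) lexx)).
have h2 := H2 m v (ltac:(by rewrite mm ms)) (ltac:(by rewrite vs (le_trans mm) // ltW)).
have e1 : `|u - m| = m - u by rewrite distrC ger0_norm // subr_ge0.
have e2 : `|m - v| = v - m by rewrite distrC ger0_norm // subr_ge0 ltW.
have e3 : `|u - v| = v - u by rewrite distrC ger0_norm // subr_ge0.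
rewrite e1 in h1; rewrite e2 in h2; rewrite e3.
have := ler_distD (h m) (h u) (h v).
have : L1 * (m - u) <= L1 * (v - u) by rewrite ler_wpM2l // lerD2r ltW.
have : L2 * (v - m) <= L2 * (v - u) by rewrite ler_wpM2l // lerD2l lerN2.
rewrite mulrDl; lra.
Qed.

Lemma locally_lipschitz_itvW a b h : locally_lipschitz_itv a b h ->
  forall t, a <= t <= b -> exists r L : R, [/\ 0 < r, 0 <= L &
    forall s u, a <= s <= b -> a <= u <= b ->
      `|s - t| < r -> `|u - t| < r -> `|h s - h u| <= L * `|s - u|].
Proof.
move=> hl t /hl [r [L [r0 H]]]; exists r, `|L|; split => // s u *.
by apply: le_trans (H _ _ _ _ _ _) _ => //; rewrite ler_wpM2r // ler_norm.
Qed.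

Lemma locally_lipschitz_itv_lipschitz a b h : a <= b ->
  locally_lipschitz_itv a b h -> exists2 L, 0 <= L & lipschitz_itv a b L h.
Proof.
move=> ab /locally_lipschitz_itvW hl.
pose Q t := exists2 L, 0 <= L & lipschitz_itv a t L h.
apply: (@real_induction _ a b Q) => //.
- exists 0 => // s u /andP[a_s sa] /andP[au ua].
  have -> : s = a by apply/eqP; rewrite eq_le sa a_s.
  have -> : u = a by apply/eqP; rewrite eq_le ua au.
  by rewrite !subrr normr0 mulr0.
- move=> t /andP[a_t tb] Qlt.
  have [r [L2 [r0 L20 H2]]] := hl t (ltac:(by rewrite (ltW a_t) tb)).
  pose m := Num.max a (t - r / 2).
  have mt : m < t by rewrite /m gt_max a_t /= ltrBlDr ltrDl divr_gt0.
  have am : a <= m by rewrite /m le_max lexx.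
  have [L1 L10 H1] := Qlt m (ltac:(by rewrite am mt)).
  exists (L1 + L2); first by rewrite addr_ge0.
  apply: (lipschitz_itv_glue L10 L20 (lexx m) (ltW mt) H1).
  have tr : t - r / 2 <= m by rewrite /m le_max lexx orbT.
  have r2 : r / 2 < r by rewrite ltr_pdivrMr // ltr_pMr // ltr1n.
  move=> u v /andP[mu ut] /andP[mv vt]; apply: H2.
  + by rewrite (le_trans am mu) (le_trans ut tb).
  + by rewrite (le_trans am mv) (le_trans vt tb).
  + by rewrite distrC ger0_norm ?subr_ge0 //; lra.
  + by rewrite distrC ger0_norm ?subr_ge0 //; lra.
- move=> t /andP[a_t tb] [L1 L10 H1].
  have [r [L2 [r0 L20 H2]]] := hl t (ltac:(by rewrite a_t (ltW tb))).
  exists r => // s /andP[ts str] sb.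
  exists (L1 + L2); first by rewrite addr_ge0.
  apply: (lipschitz_itv_glue L10 L20 (lexx t) (ltW ts) H1).
  move=> u v /andP[tu us] /andP[tv vs]; apply: H2.
  + by rewrite (le_trans a_t tu) (le_trans us sb).
  + by rewrite (le_trans a_t tv) (le_trans vs sb).
  + by rewrite ger0_norm ?subr_ge0 //; lra.
  + by rewrite ger0_norm ?subr_ge0 //; lra.
Qed.

End LipschitzOnInterval.

Section ZeroDerivative.
Context {R : realType}.
Implicit Types (a b L : R) (h : R -> R).

Lemma derive0_small_increment h t e : 0 < e -> derivable h t 1 -> 'D_1 h t = 0 ->
  exists2 d, 0 < d & forall s, t < s < t + d -> `|h s - h t| <= e * (s - t).
Proof.
move=> e0 hd hD; move: hd; rewrite /derivable -/(derive h t 1) hD.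
move=> /cvgrPdist_lt /(_ e e0); rewrite near_withinE => /nbhs_ballP [d d0 Hd].
exists d => // s /andP[ts std].
have st0 : s - t != 0 by rewrite subr_eq0 gt_eqF.
have /Hd /(_ st0) : ball (0 : R) d (s - t).
  by rewrite /ball /= sub0r normrN ger0_norm ?subr_ge0; lra.
rewrite /= sub0r normrN /GRing.scale /= mulr1 subrK normrM normfV.
rewrite (@ger0_norm _ (s - t)) ?subr_ge0 ?(ltW ts) // mulrC.
by rewrite ltr_pdivrMr ?subr_gt0 // => /ltW.
Qed.

Section IncrementBound.
Variables (a b L eps : R) (h : R -> R) (U : set R).
Hypotheses (ab : a <= b) (L0 : 0 <= L) (eps0 : 0 < eps)
  (hL : lipschitz_itv a b L h) (oU : open U)
  (Ufin : (lebesgue_measure U < +oo)%E)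
  (h'0 : forall t, a <= t <= b -> ~ U t -> derivable h t 1 /\ 'D_1 h t = 0).

Let mU : measurable U. Proof. exact: open_measurable. Qed.

Let mUI v : measurable (U `&` [set` `[a, v]]).
Proof. by apply: measurableI => //; exact: measurable_itv. Qed.

Let covered v := fine (lebesgue_measure (U `&` [set` `[a, v]])).

Let coveredE v : (covered v)%:E = lebesgue_measure (U `&` [set` `[a, v]]).
Proof.
rewrite fineK // ge0_fin_numE // (le_lt_trans _ Ufin) //.
by apply: le_measure; rewrite ?inE; [exact: mUI | exact: mU | exact: subIsetl].
Qed.

Let covered_le_U v : covered v <= fine (lebesgue_measure U).
Proof.
rewrite -lee_fin coveredE fineK ?ge0_fin_numE //.
by apply: le_measure; rewrite ?inE; [exact: mUI | exact: mU | exact: subIsetl].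
Qed.

Let covered_ge0 v : 0 <= covered v.
Proof. by rewrite -lee_fin coveredE. Qed.

Let covered_mono s t : s <= t -> covered s <= covered t.
Proof.
move=> st; rewrite -lee_fin !coveredE.
apply: le_measure; rewrite ?inE; [exact: mUI | exact: mUI |].
move=> z [Uz /=]; rewrite !in_itv /= => /andP[az zs]; split => //=.
by rewrite ?in_itv /= az (le_trans zs st).
Qed.

Let covered_grow t s : a <= t -> t < s -> [set` `]t, s]] `<=` U ->
  covered t + (s - t) <= covered s.
Proof.
move=> a_t ts tsU; rewrite -lee_fin EFinD !coveredE.
have -> : (s - t)%:E = lebesgue_measure [set` `]t, s]] :> \bar R.
  by rewrite lebesgue_measure_itv /= lte_fin ts -EFinD.
have mI : measurable [set` `]t, s]] := measurable_itv _.
have disj : (U `&` [set` `[a, t]]) `&` [set` `]t, s]] = set0.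
  rewrite -subset0 => z [[_ /=]]; rewrite !in_itv /= => /andP[_ zt] /andP[tz _].
  by move: (le_lt_trans zt tz); rewrite ltxx.
rewrite -(measureU lebesgue_measure (mUI t) mI disj); apply: le_measure; rewrite ?inE.
- exact: measurableU (mUI t) mI.
- exact: mUI.
move=> z [[Uz /=]|/[dup] /tsU Uz /=]; rewrite !in_itv /=.
  by move=> /andP[az zt]; split => //=; rewrite ?in_itv /= az (le_trans zt (ltW ts)).
move=> /andP[tz zs]; split => //=; rewrite ?in_itv /= zs andbT.
exact: le_trans a_t (ltW tz).
Qed.

Lemma increment_bound : `|h b - h a| <= eps * (b - a) + L * fine (lebesgue_measure U).
Proof.
pose Q t := `|h t - h a| <= eps * (t - a) + L * covered t.
suff Qb : Q b.
  by apply: le_trans Qb _; rewrite lerD2l; exact: ler_wpM2l (covered_le_U b).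
apply: (@real_induction _ a b Q) => //.
- by rewrite /Q !subrr normr0 mulr0 add0r mulr_ge0 ?covered_ge0.
- move=> t /andP[a_t tb] Qlt; apply/ler_addgt0Pr => e e0.
  pose s := Num.max a (t - e / (L + 1)).
  have a_s : a <= s by rewrite /s le_max lexx.
  have st : s < t by rewrite /s gt_max a_t /= ltrBlDr ltrDl divr_gt0 // ltr_wpDl.
  have ts : t - s <= e / (L + 1).
    have : t - e / (L + 1) <= s by rewrite /s le_max lexx orbT.
    lra.
  have hts : `|h t - h s| <= e.
    apply: le_trans (hL _ _) _; first by rewrite (ltW a_t) tb.
      by rewrite a_s (le_trans (ltW st) tb).
    rewrite ger0_norm ?subr_ge0 ?(ltW st) //.
    apply: le_trans (ler_wpM2l L0 ts) _.
    rewrite mulrCA ger_pMr // ?ler_pdivrMr ?mul1r ?lerDl //; last exact: ltr_wpDl.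
  have := Qlt s (ltac:(by rewrite a_s st)); rewrite /Q.
  have : eps * (s - a) <= eps * (t - a) by apply: ler_wpM2l; [exact: ltW | lra].
  have : L * covered s <= L * covered t by rewrite ler_wpM2l // covered_mono // ltW.
  have := ler_distD (h s) (h t) (h a); lra.
- move=> t /andP[a_t tb] Qt.
  have [Ut|Ut] := pselect (U t).
  + have /nbhs_ballP [r r0 Hr] : nbhs t U by apply: open_nbhs_nbhs; split.
    exists r => // s /andP[ts str] sb.
    have tsU : [set` `]t, s]] `<=` U.
      move=> z /=; rewrite in_itv /= => /andP[tz zs]; apply: Hr.
      by rewrite /ball /= ler0_norm ?subr_le0 ?ltW //; lra.
    have := ler_wpM2l L0 (covered_grow a_t ts tsU); rewrite mulrDr.
    have : `|h s - h t| <= L * (s - t).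
      apply: le_trans (hL _ _) _; first by rewrite sb (le_trans a_t (ltW ts)).
        by rewrite a_t (le_trans (ltW ts) sb).
      by rewrite ger0_norm // subr_ge0 ltW.
    have : eps * (t - a) <= eps * (s - a) by apply: ler_wpM2l; [exact: ltW | lra].
    have := ler_distD (h t) (h s) (h a); move: Qt; rewrite /Q; lra.
  + have [|hd hD] := @h'0 t _ Ut; first by rewrite a_t ltW.
    have [d d0 Hd] := derive0_small_increment eps0 hd hD.
    exists d => // s /andP[ts std] sb.
    have := Hd s (ltac:(by rewrite ts std)).
    have : L * covered t <= L * covered s by rewrite ler_wpM2l // covered_mono // ltW.
    have := ler_distD (h t) (h s) (h a); move: Qt; rewrite /Q; lra.
Qed.

End IncrementBound.

Lemma ae_derive0_const a b h : a <= b -> locally_lipschitz_itv a b h ->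
  {ae (@lebesgue_measure R), forall t, t \in `[a, b] ->
      derivable h t 1 /\ 'D_1 h t = 0} ->
  h b = h a.
Proof.
move=> ab hl [N [mN N0 HN]]; have [L L0 hL] := locally_lipschitz_itv_lipschitz ab hl.
apply/eqP; rewrite -subr_eq0 -normr_le0; apply/ler_addgt0Pr => eta eta0.
rewrite add0r.
have ba1 : 0 < b - a + 1 by rewrite ltr_wpDl // subr_ge0.
have L1 : 0 < L + 1 by rewrite ltr_wpDl.
pose eps := eta / (2 * (b - a + 1)).
pose del := eta / (2 * (L + 1)).
have eps0 : 0 < eps by rewrite divr_gt0 // mulr_gt0.
have del0 : 0 < del by rewrite divr_gt0 // mulr_gt0.
have Nfin : (lebesgue_measure N < +oo)%E by rewrite N0 ltry.
have [U [oU NU UNdel]] := lebesgue_regularity_outer mN Nfin del0.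
have Udel : (lebesgue_measure U < del%:E)%E.
  rewrite -(setDUK NU); apply: le_lt_trans (measureU2 _ mN _) _.
    by apply: measurableD => //; exact: open_measurable.
  by rewrite -[X in (X + _)%E]/(lebesgue_measure N) N0 add0e.
have Ufin : (lebesgue_measure U < +oo)%E by apply: lt_trans Udel _; rewrite ltry.
have h'0 t : a <= t <= b -> ~ U t -> derivable h t 1 /\ 'D_1 h t = 0.
  move=> tab Ut; apply: contrapT => nP; apply: Ut; apply: NU; apply: HN => /=.
  by move=> /(_ (ltac:(by rewrite in_itv))).
apply: le_trans (increment_bound ab L0 eps0 hL oU Ufin h'0) _.
have Ule : fine (lebesgue_measure U) <= del.
  by rewrite -lee_fin fineK ?ge0_fin_numE // ltW.
have e1 : eps * (b - a) <= eta / 2.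
  have -> : eta / 2 = eps * (b - a + 1) by rewrite /eps; field; lra.
  by rewrite ler_wpM2l ?ltW //; lra.
have e2 : L * fine (lebesgue_measure U) <= eta / 2.
  have -> : eta / 2 = (L + 1) * del by rewrite /del; field; lra.
  apply: le_trans (ler_wpM2l L0 Ule) _.
  by rewrite ler_wpM2r ?ltW //; lra.
lra.
Qed.

End ZeroDerivative.

Section EuclideanNorm.
Context {R : realType} {n : nat}.
Implicit Types x y z : 'rV[R]_n.

Definition sqnorm x := \sum_(i < n) x ord0 i ^+ 2.
Definition dotr x y := \sum_(i < n) x ord0 i * y ord0 i.

Lemma sqnorm_ge0 x : 0 <= sqnorm x.
Proof. by apply: sumr_ge0 => i _; exact: sqr_ge0. Qed.

Lemma enorm_ge0 x : 0 <= enorm x. Proof. exact: sqrtr_ge0. Qed.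

Lemma enorm_sqr x : enorm x ^+ 2 = sqnorm x.
Proof. by rewrite sqr_sqrtr // sqnorm_ge0. Qed.

Lemma enorm0 : enorm (0 : 'rV[R]_n) = 0.
Proof. by rewrite /enorm big1 ?sqrtr0 // => i _; rewrite mxE expr0n. Qed.

Lemma enormN x : enorm (- x) = enorm x.
Proof. by congr Num.sqrt; apply: eq_bigr => i _; rewrite mxE sqrrN. Qed.

Lemma enorm_distC x y : enorm (x - y) = enorm (y - x).
Proof. by rewrite -enormN opprB. Qed.

Lemma sqnormD x y : sqnorm (x + y) = sqnorm x + 2 * dotr x y + sqnorm y.
Proof.
rewrite /sqnorm /dotr mulr_sumr -!big_split /=; apply: eq_bigr => i _.
by rewrite mxE; ring.
Qed.

Lemma coord_le_enorm x i : `|x ord0 i| <= enorm x.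
Proof.
rewrite -(sqrtr_sqr (x ord0 i)) ler_sqrt; last exact: sqnorm_ge0.
by rewrite /sqnorm (bigD1 i) //= lerDl; apply: sumr_ge0 => j _; exact: sqr_ge0.
Qed.

Lemma enorm_eq0 x : enorm x = 0 -> x = 0.
Proof.
move=> x0; apply/rowP => i; rewrite mxE; apply/eqP; rewrite -normr_le0 -x0.
exact: coord_le_enorm.
Qed.

Lemma dotr_sqr_le x y : dotr x y ^+ 2 <= sqnorm x * sqnorm y.
Proof.
have [y0|yn0] := eqVneq (sqnorm y) 0.
  suff -> : dotr x y = 0 by rewrite expr0n /= mulr_ge0 // sqnorm_ge0.
  apply: big1 => i _; have := coord_le_enorm y i.
  by rewrite /enorm -/(sqnorm y) y0 sqrtr0 normr_le0 => /eqP ->; rewrite mulr0.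
have y_gt0 : 0 < sqnorm y by rewrite lt_def yn0 sqnorm_ge0.
pose c := dotr x y / sqnorm y.
have : 0 <= \sum_(i < n) (x ord0 i - c * y ord0 i) ^+ 2.
  by apply: sumr_ge0 => i _; exact: sqr_ge0.
have -> : \sum_(i < n) (x ord0 i - c * y ord0 i) ^+ 2 =
    (sqnorm x * sqnorm y - dotr x y ^+ 2) / sqnorm y.
  transitivity (sqnorm x - 2 * c * dotr x y + c ^+ 2 * sqnorm y).
    rewrite /sqnorm /dotr !mulr_sumr -sumrB -big_split /=.
    by apply: eq_bigr => i _; ring.
  by rewrite /c; field; rewrite yn0.
by rewrite pmulr_lge0 ?invr_gt0 // subr_ge0.
Qed.

Lemma enormD x y : enorm (x + y) <= enorm x + enorm y.
Proof.
rewrite -(ler_pXn2r (_ : (0 < 2)%N)) ?nnegrE ?addr_ge0 ?enorm_ge0 //.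
rewrite enorm_sqr sqnormD sqrrD !enorm_sqr lerD2r lerD2l.
rewrite -[X in _ <= X]mulr_natl; apply: ler_wpM2l => //.
apply: le_trans (ler_norm _) _.
rewrite -(sqrtr_sqr (dotr x y)) /enorm -/(sqnorm x) -/(sqnorm y) -sqrtrM ?sqnorm_ge0 //.
by rewrite ler_sqrt ?mulr_ge0 ?sqnorm_ge0 // dotr_sqr_le.
Qed.

Lemma enorm_distD x y z : enorm (x - z) <= enorm (x - y) + enorm (y - z).
Proof. by rewrite (le_trans _ (enormD _ _)) // addrA subrK. Qed.

Lemma coord_le_mx_norm x i : `|x ord0 i| <= `|x|.
Proof. by rewrite [X in _ <= X]mx_normrE; apply: le_trans (le_bigmax _ _ (ord0, i)). Qed.

Lemma enorm_le_mx_norm x : enorm x <= n%:R * `|x|.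
Proof.
rewrite -(ler_pXn2r (_ : (0 < 2)%N)) ?nnegrE ?mulr_ge0 ?enorm_ge0 //.
rewrite enorm_sqr exprMn; apply: le_trans (_ : \sum_(i < n) `|x| ^+ 2 <= _).
  apply: ler_sum => i _; rewrite -real_normK ?num_real // ler_pXn2r ?nnegrE //.
  exact: coord_le_mx_norm.
rewrite sumr_const card_ord -[X in X <= _]mulr_natl; apply: ler_wpM2r; first exact: sqr_ge0.
rewrite -natrX ler_nat expnS expn1.
by case: (posnP n) => [->|/leq_pmulr].
Qed.

End EuclideanNorm.

Section LinearFunctional.
Context {R : realType} {n : nat} (A : {linear 'rV[R]_n -> R^o}).

Definition linear_bound := \sum_(i < n) `|A 'e_i|.

Lemma linear_bound_ge0 : 0 <= linear_bound.
Proof. by apply: sumr_ge0. Qed.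

Lemma linear_le_coord_bound (x : 'rV[R]_n) M : (forall i, `|x ord0 i| <= M) ->
  `|A x| <= linear_bound * M.
Proof.
move=> xM; rewrite {1}(row_sum_delta x) linear_sum /=.
apply: le_trans (ler_norm_sum _ _ _) _.
rewrite /linear_bound mulr_suml; apply: ler_sum => i _.
by rewrite linearZ /= normrM mulrC ler_wpM2l.
Qed.

Lemma linear_le_enorm (x : 'rV[R]_n) : `|A x| <= linear_bound * enorm x.
Proof. by apply: linear_le_coord_bound => i; exact: coord_le_enorm. Qed.

Lemma linear_cont : continuous A.
Proof.
move=> x; apply/(@cvgrPdist_lt _ _ _ _ (@nbhs_filter _ x)) => e e0.
have C1 : 0 < linear_bound + 1 by rewrite ltr_wpDl // linear_bound_ge0.
have e' : 0 < e / (linear_bound + 1) by rewrite divr_gt0.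
near=> z.
have : ball x (e / (linear_bound + 1)) z by near: z; exact: nbhsx_ballx.
rewrite -ball_normE /= -linearB => xz.
apply: le_lt_trans (linear_le_coord_bound (fun i => coord_le_mx_norm _ i)) _.
apply: le_lt_trans (ler_wpM2l linear_bound_ge0 (ltW xz)) _.
rewrite mulrCA gtr_pMr // ltr_pdivrMr // mul1r ltrDl //.
Unshelve. all: by end_near.
Qed.

Lemma derivable_linear_comp (p : R -> 'rV[R]_n) t : derivable p t 1 ->
  derivable (A \o p) t 1 /\ 'D_1 (A \o p) t = A ('D_1 p t).
Proof.
move=> dp.
have dp' : (fun h => h^-1 *: ((p \o shift t) (h *: 1) - p t)) @ 0^' --> 'D_1 p t := dp.
have dAp : (fun h : R => h^-1 *: (((A \o p) \o shift t) (h *: 1) - (A \o p) t)) @ 0^'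
    --> A ('D_1 p t).
  have -> : (fun h : R => h^-1 *: (((A \o p) \o shift t) (h *: 1) - (A \o p) t)) =
      A \o (fun h => h^-1 *: ((p \o shift t) (h *: 1) - p t)).
    by apply/funext => h /=; rewrite [RHS]linearZ [in RHS]raddfB.
  exact: continuous_cvg _ (@linear_cont ('D_1 p t)) dp'.
by split; [exact: cvgP dAp | exact: cvg_lim dAp].
Qed.

End LinearFunctional.

Section ArcLength.
Context {R : realType} {n : nat} (g : R -> 'rV[R]_n) (a b : R).
Hypotheses (ab : a <= b) (gc : {within `[a, b], continuous g})
  (g_rect : (path_length g a b < +oo)%E).

Local Notation len u := (path_length g a u).

Lemma path_length_extend t u : a <= t -> t <= u ->
  (len t + (enorm (g u - g t))%:E <= len u)%E.
Proof.
move=> a_t tu; rewrite -leeBrDr //; apply: ge_ereal_sup => _ [m [s [s0 sm smono ->]]].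
rewrite leeBrDr // -EFinD; apply: ereal_sup_ubound.
exists m.+1, (fun i => if (i <= m)%N then s i else u); split.
- by rewrite leq0n.
- by rewrite ltnn.
- move=> i; rewrite ltnS => im; rewrite im.
  have [/smono//|mi] := ltnP i m.
  have -> : i = m by apply/eqP; rewrite eqn_leq im mi.
  by rewrite sm.
- rewrite big_ord_recr /= ltnn leqnn sm; congr ((_ + _)%:E).
  by apply: eq_bigr => i _ /=; rewrite ltn_ord ltnW.
Qed.

Lemma path_length_ge0 : (0 <= len a)%E.
Proof.
apply: ereal_sup_ubound; exists 0%N, (fun _ => a); split => //.
by rewrite big_ord0.
Qed.

Lemma path_length_fin t : a <= t <= b -> len t \is a fin_num.
Proof.
move=> /andP[a_t tb]; rewrite ge0_fin_numE.
  apply: le_lt_trans g_rect; apply: le_trans (path_length_extend a_t tb).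
  by rewrite leeDl // lee_fin enorm_ge0.
apply: le_trans path_length_ge0 _; apply: le_trans (path_length_extend (lexx a) a_t).
by rewrite leeDl // lee_fin enorm_ge0.
Qed.

Definition arclength t := fine (len t) - fine (len a).

Lemma arclength_extend t u : a <= t -> t <= u -> u <= b ->
  arclength t + enorm (g u - g t) <= arclength u.
Proof.
move=> a_t tu ub.
have ft : len t \is a fin_num by apply: path_length_fin; rewrite a_t (le_trans tu ub).
have fu : len u \is a fin_num by apply: path_length_fin; rewrite (le_trans a_t tu) ub.
have := path_length_extend a_t tu; rewrite -(fineK ft) -(fineK fu) -EFinD lee_fin.
by rewrite /arclength; lra.
Qed.

Lemma arclength_left : arclength a = 0. Proof. by rewrite /arclength subrr. Qed.

Lemma arclength_ge0 t : a <= t -> t <= b -> 0 <= arclength t.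
Proof.
move=> a_t tb; have := arclength_extend (lexx a) a_t tb.
by rewrite arclength_left add0r; apply: le_trans; exact: enorm_ge0.
Qed.

Lemma arclength_mono t u : a <= t -> t <= u -> u <= b -> arclength t <= arclength u.
Proof.
move=> a_t tu ub; have := arclength_extend a_t tu ub.
by apply: le_trans; rewrite lerDl enorm_ge0.
Qed.

Lemma path_cont_enorm t : a <= t <= b -> forall e, 0 < e ->
  exists2 d, 0 < d & forall u, a <= u <= b -> `|u - t| < d -> enorm (g u - g t) < e.
Proof.
move=> tab e e0.
have : g @ within [set` `[a, b]] (nbhs t) --> g t.
  by move/subspace_continuousP : gc; apply; rewrite /= in_itv.
have n1 : 0 < n%:R + 1 :> R by rewrite ltr_wpDl.
have e' : 0 < e / (n%:R + 1) by rewrite divr_gt0.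
move=> /cvgrPdist_lt /(_ _ e'); rewrite near_withinE => /nbhs_ballP [d d0 Hd].
exists d => // u uab ut.
have /Hd /(_ (ltac:(by rewrite /= in_itv))) gtu : ball t d u by rewrite /ball /= distrC.
rewrite enorm_distC; apply: le_lt_trans (enorm_le_mx_norm _) _.
apply: le_lt_trans (ler_wpM2l (ler0n _ _) (ltW gtu)) _.
by rewrite mulrCA gtr_pMr // ltr_pdivrMr // mul1r ltrDl.
Qed.

Lemma enorm_incr_le_inner t1 t2 c : a <= t1 -> t1 <= t2 -> t2 <= b -> 0 <= c ->
  (forall u v, t1 < u -> u <= v -> v < t2 -> enorm (g v - g u) <= c) ->
  enorm (g t2 - g t1) <= c.
Proof.
move=> a1 t12 b2 c0 inner.
have [->|t12'] := eqVneq t1 t2; first by rewrite subrr enorm0.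
have l12 : t1 < t2 by rewrite lt_def eq_sym t12' t12.
apply/ler_addgt0Pr => e e0.
have e2 : 0 < e / 2 by rewrite divr_gt0.
have [d1 d10 H1] := @path_cont_enorm t1 (ltac:(by rewrite a1 (le_trans t12 b2))) _ e2.
have [d2 d20 H2] := @path_cont_enorm t2 (ltac:(by rewrite (le_trans a1 t12) b2)) _ e2.
pose d := Num.min (Num.min d1 d2) ((t2 - t1) / 2).
have d0 : 0 < d by rewrite /d !lt_min d10 d20 /= divr_gt0 // subr_gt0.
have dd1 : d <= d1 by rewrite /d !ge_min lexx.
have dd2 : d <= d2 by rewrite /d !ge_min lexx orbT.
have dd3 : d <= (t2 - t1) / 2 by rewrite /d !ge_min lexx orbT.
pose u := t1 + d / 2.
pose v := t2 - d / 2.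
have hd2 : 0 < d / 2 by rewrite divr_gt0.
have hd3 : d / 2 < d by rewrite ltr_pdivrMr // ltr_pMr // ltr1n.
have hu : t1 < u by rewrite /u ltrDl.
have hv : v < t2 by rewrite /v ltrBlDr ltrDl.
have huv : u <= v by rewrite /u /v; lra.
have Hu : enorm (g u - g t1) < e / 2.
  apply: H1; first by rewrite (le_trans a1 (ltW hu)) (le_trans huv) // (le_trans (ltW hv)).
  by rewrite /u addrAC subrr add0r ger0_norm ?ltW //; apply: lt_le_trans dd1.
have Hv : enorm (g v - g t2) < e / 2.
  apply: H2; last by rewrite /v addrAC subrr add0r normrN ger0_norm ?ltW //; apply: lt_le_trans dd2.
  by rewrite (le_trans a1 (le_trans (ltW hu) huv)) (le_trans (ltW hv)).
have := inner u v hu huv hv.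
have := enorm_distD (g t2) (g v) (g t1); have := enorm_distD (g v) (g u) (g t1).
rewrite (enorm_distC (g t2) (g v)); lra.
Qed.

Definition arclength_sublevel r := [set t | a <= t <= b /\ arclength t <= r].

(* The inverse of the arc length, sending r to the last time of arc length r. *)
Definition arclength_inv r := sup (arclength_sublevel r).

Lemma arclength_sublevel_left r : 0 <= r -> arclength_sublevel r a.
Proof. by move=> r0; split; [rewrite lexx ab | rewrite arclength_left]. Qed.

Lemma arclength_sublevel_sup r : 0 <= r -> has_sup (arclength_sublevel r).
Proof.
move=> r0; split; first by exists a; exact: arclength_sublevel_left.
by exists b => t [/andP[_ ->]].
Qed.

Lemma arclength_inv_itv r : 0 <= r -> a <= arclength_inv r <= b.
Proof.
move=> r0; rewrite (sup_upper_bound (arclength_sublevel_sup r0) (arclength_sublevel_left r0)).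
by apply: ge_sup; [exists a; exact: arclength_sublevel_left | move=> t [/andP[_ ->]]].
Qed.

Lemma arclength_inv_bound r u v : 0 <= r -> a <= u -> u <= v -> v < arclength_inv r ->
  arclength u + enorm (g v - g u) <= r.
Proof.
move=> r0 a_u uv v_inv.
have [w [/andP[aw wb] wr] vw] :=
  sup_adherent (eps := arclength_inv r - v) (ltac:(by rewrite subr_gt0))
    (arclength_sublevel_sup r0).
have vw' : v < w by move: vw; rewrite -/(arclength_inv r); lra.
apply: le_trans (arclength_extend a_u uv (le_trans (ltW vw') wb)) _.
by apply: le_trans wr; apply: arclength_mono (ltW vw') wb; exact: le_trans uv.
Qed.

Lemma arclength_inv_lipschitz r1 r2 : 0 <= r1 -> r1 <= r2 ->
  enorm (g (arclength_inv r2) - g (arclength_inv r1)) <= r2 - r1.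
Proof.
move=> r10 r12; have r20 : 0 <= r2 := le_trans r10 r12.
have /andP[a1 _] := arclength_inv_itv r10; have /andP[_ b2] := arclength_inv_itv r20.
have t12 : arclength_inv r1 <= arclength_inv r2.
  apply: ge_sup; first by exists a; exact: arclength_sublevel_left.
  move=> t [tab tr]; apply: (sup_upper_bound (arclength_sublevel_sup r20)).
  by split => //; exact: le_trans tr r12.
apply: enorm_incr_le_inner => //; first by rewrite subr_ge0.
move=> u v hu uv hv; have a_u : a <= u by rewrite (le_trans a1) // ltW.
have r1u : r1 < arclength u.
  rewrite ltNge; apply/negP => ur1.
  have Su : arclength_sublevel r1 u.
    by split => //; rewrite a_u (le_trans uv) // (le_trans (ltW hv)).
  by have := sup_upper_bound (arclength_sublevel_sup r10) Su; rewrite leNgt hu.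
have := arclength_inv_bound r20 a_u uv hv; lra.
Qed.

Lemma arclength_inv0 : g (arclength_inv 0) = g a.
Proof.
have /andP[a0 b0] := arclength_inv_itv (lexx 0).
have : enorm (g (arclength_inv 0) - g a) <= 0.
  apply: enorm_incr_le_inner => // u v hu uv hv.
  have := arclength_inv_bound (lexx 0) (ltW hu) uv hv.
  have := arclength_ge0 (ltW hu) (le_trans uv (le_trans (ltW hv) b0)); lra.
move=> le0; apply/eqP; rewrite -subr_eq0; apply/eqP/enorm_eq0.
by apply/eqP; rewrite eq_le le0 enorm_ge0.
Qed.

Lemma arclength_inv_total : arclength_inv (arclength b) = b.
Proof.
have s0 : 0 <= arclength b := arclength_ge0 ab (lexx b).
have /andP[_ tb] := arclength_inv_itv s0.
apply/eqP; rewrite eq_le tb /=; apply: (sup_upper_bound (arclength_sublevel_sup s0)).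
by split; rewrite ?ab ?lexx.
Qed.

Lemma arclength_reparametrisation : exists (l : R) (p : R -> 'rV[R]_n),
  [/\ 0 <= l, p 0 = g a, p l = g b,
      (forall r, 0 <= r -> exists2 t, a <= t <= b & p r = g t) &
      (forall r1 r2, 0 <= r1 -> 0 <= r2 -> enorm (p r1 - p r2) <= `|r1 - r2|)].
Proof.
exists (arclength b), (g \o arclength_inv); split => /=.
- exact: arclength_ge0 ab (lexx b).
- exact: arclength_inv0.
- by rewrite arclength_inv_total.
- by move=> r r0; exists (arclength_inv r) => //; exact: arclength_inv_itv.
- move=> r1 r2 r10 r20; have [r12|r21] := lerP r1 r2.
    by rewrite enorm_distC arclength_inv_lipschitz.
  by rewrite arclength_inv_lipschitz // ltW.
Qed.

End ArcLength.

Section AlongLipschitzPaths.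
Context {R : realType} {n : nat} (E : set 'rV[R]_n) (f : 'rV[R]_n -> R)
  (A : {linear 'rV[R]_n -> R^o}) (p : R -> 'rV[R]_n) (a b : R).
Hypotheses (fl : loc_lipschitz_on E f) (pE : forall t, a <= t <= b -> E (p t))
  (p1 : forall s u, a <= s <= b -> a <= u <= b -> enorm (p s - p u) <= `|s - u|).

Lemma locally_lipschitz_itv_sub_linear :
  locally_lipschitz_itv a b ((f \o p) - (A \o p)).
Proof.
have hE t : ((f \o p) - (A \o p)) t = f (p t) - A (p t) by [].
move=> t tab; have [r [L [r0 fL]]] := fl (pE tab).
exists r, (`|L| + linear_bound A); split => // s u sab uab st ut.
have fsu := fL _ _ (pE sab) (pE uab)
  (le_lt_trans (p1 sab tab) st) (le_lt_trans (p1 uab tab) ut).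
rewrite !hE; have -> : f (p s) - A (p s) - (f (p u) - A (p u)) =
    (f (p s) - f (p u)) - A (p s - p u) by rewrite linearB /=; ring.
apply: le_trans (ler_normB _ _) _; rewrite mulrDl; apply: lerD.
  apply: le_trans fsu _; apply: le_trans (ler_wpM2r (enorm_ge0 _) (ler_norm L)) _.
  by apply: ler_wpM2l; [exact: normr_ge0 | exact: p1].
apply: le_trans (linear_le_enorm _ _) _.
by apply: ler_wpM2l; [exact: linear_bound_ge0 | exact: p1].
Qed.

Lemma sub_linear_const_along_path : a <= b ->
  {ae (@lebesgue_measure R), forall t, t \in `[a, b] ->
     [/\ derivable p t 1, derivable (f \o p) t 1 &
         'D_1 (f \o p) t = A ('D_1 p t)]} ->
  f (p b) - A (p b) = f (p a) - A (p a).
Proof.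
move=> ab [N [mN N0 HN]].
apply: (@ae_derive0_const _ a b ((f \o p) - (A \o p)) ab locally_lipschitz_itv_sub_linear).
exists N; split => // t /= not_derive0; apply: HN => /= chain; apply: not_derive0 => tab.
have [dp dfp Dfp] := chain tab; have [dAp DAp] := derivable_linear_comp A dp.
by split; [exact: derivableB | rewrite deriveB // DAp Dfp subrr].
Qed.

End AlongLipschitzPaths.

Lemma quasiconvex_lipschitz_path (R : realType) (n : nat) (E : set 'rV[R]_n) k x y :
  quasiconvex E k -> E x -> E y ->
  exists (l : R) (p : R -> 'rV[R]_n), [/\ 0 <= l, p 0 = x, p l = y,
    forall t, 0 <= t -> E (p t) &
    forall s u, 0 <= s -> 0 <= u -> enorm (p s - p u) <= `|s - u|].
Proof.
move=> qc Ex Ey; have [a [b [g [ab gc [ga gb] gE glen]]]] := qc x y Ex Ey.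
have g_rect : (path_length g a b < +oo)%E by apply: le_lt_trans glen _; rewrite ltry.
have [l [p [l0 p0 pl pg p1]]] := arclength_reparametrisation ab gc g_rect.
exists l, p; split; rewrite ?p0 ?pl //.
by move=> t /pg [s sab ->]; exact: gE.
Qed.

Unset Implicit Arguments.

Theorem mainTheorem3 (R : realType) (n : nat) (E : set 'rV[R]_n) (k : R)
  (A : {linear 'rV[R]_n -> R^o}) (f : 'rV[R]_n -> R) :
  closed E -> 1 <= k -> quasiconvex E k ->
  loc_lipschitz_on E f ->
  (forall (I : interval R) (p : R -> 'rV[R]_n),
     (forall t, t \in I -> E (p t)) -> loc_lipschitz_path I p ->
     {ae (@lebesgue_measure R), forall t, t \in I ->
        [/\ derivable p t 1, derivable (f \o p) t 1 &
            'D_1 (f \o p) t = A ('D_1 p t)]}) ->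
  exists (B : {linear 'rV[R]_n -> R^o}) (c : R),
    forall x, E x -> f x = B x + c.
Proof.
move=> _ _ qc fl chain.
have f_sub_A x y : E x -> E y -> f y - A y = f x - A x.
  move=> Ex Ey; have [l [p [l0 <- <- pE p1]]] := quasiconvex_lipschitz_path qc Ex Ey.
  have pE' t : 0 <= t <= l -> E (p t) by case/andP => t0 _; exact: pE.
  have p1' s u : 0 <= s <= l -> 0 <= u <= l -> enorm (p s - p u) <= `|s - u|.
    by case/andP => s0 _ /andP[u0 _]; exact: p1.
  apply: (sub_linear_const_along_path fl pE' p1' l0); apply: chain.
    by move=> t; rewrite in_itv /=; exact: pE'.
  move=> t _; exists 1, 1; split => // s u; rewrite !in_itv /= mul1r => sl ul _ _.
  exact: p1'.
have [[x0 Ex0]|noE] := pselect (exists x, E x).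
  exists A, (f x0 - A x0) => x Ex.
  by rewrite -(f_sub_A x0 x Ex0 Ex) addrCA subrr addr0.
by exists A, 0 => x Ex; case: noE; exists x.
Qed.
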